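(* Let $\omega=e^{2\pi i/3}$, $\mathcal{E}=\mathbb{Z}[\omega]$, $\theta=\omega-\bar\omega$, and identify $\mathbb{C}^3$ with $\mathbb{R}^6$. Let $\Lambda_1,\dots,\Lambda_4\subset\mathbb{C}^3$ be the sets of $\mathcal{E}$-linear combinations of the rows of, respectively, $$\begin{bmatrix}\theta&0&0\\0&\theta&0\\0&0&\theta\end{bmatrix},\ \begin{bmatrix}1&1&1\\1&\omega&\bar\omega\\1&\bar\omega&\omega\end{bmatrix},\ \begin{bmatrix}1&1&\omega\\1&\omega&1\\1&\bar\omega&\bar\omega\end{bmatrix},\ \begin{bmatrix}1&1&\bar\omega\\1&\omega&\omega\\1&\bar\omega&1\end{bmatrix}$$ (each a copy of $\mathcal{E}^3\cong A_2^3$). Then $\Lambda_1\cap\Lambda_2\cap\Lambda_3\cap\Lambda_4$ is a lattice similar to $E_6^\ast$, the dual of the root lattice $E_6$.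
   Context: $\mathcal{E}$ is the ring of Eisenstein integers, which as a real 2-dimensional lattice is similar to the hexagonal lattice $A_2$. Two lattices are similar if one is mapped to the other by a linear map multiplying all inner products by a common positive constant. *)

From HB Require Import structures.
From mathcomp Require Import all_boot all_order all_algebra.
From mathcomp Require Import reals complex.
Set Implicit Arguments. Unset Strict Implicit. Unset Printing Implicit Defensive.
Import Order.TTheory GRing.Theory Num.Theory.
Local Open Scope ring_scope.
Local Open Scope complex_scope.

Section Defs.
Variable R : realType.

Definition omega : R[i] := (- (1/2)) +i* (Num.sqrt 3 / 2).
Definition omegab : R[i] := conjc omega.
Definition theta : R[i] := omega - omegab.

Definition eisenstein (z : R[i]) : Prop :=
  exists a b : int, z = a%:~R + b%:~R * omega.

Definition Espan (M : 'M[R[i]]_3) (v : 'rV[R[i]]_3) : Prop :=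
  exists a : 'rV[R[i]]_3, (forall j, eisenstein (a 0 j)) /\ v = a *m M.

Definition mx3 (l : seq (seq R[i])) : 'M[R[i]]_3 :=
  \matrix_(i < 3, j < 3) nth 0 (nth [::] l i) j.

Definition M1 := mx3 [:: [:: theta; 0; 0]; [:: 0; theta; 0]; [:: 0; 0; theta]].
Definition M2 := mx3 [:: [:: 1; 1; 1]; [:: 1; omega; omegab]; [:: 1; omegab; omega]].
Definition M3 := mx3 [:: [:: 1; 1; omega]; [:: 1; omega; 1]; [:: 1; omegab; omegab]].
Definition M4 := mx3 [:: [:: 1; 1; omegab]; [:: 1; omega; omega]; [:: 1; omegab; 1]].

Definition Lambda_int (v : 'rV[R[i]]_3) : Prop :=
  [/\ Espan M1 v, Espan M2 v, Espan M3 v & Espan M4 v].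

Definition cdot (v w : 'rV[R[i]]_3) : R :=
  \sum_(j < 3) (complex.Re (v 0 j) * complex.Re (w 0 j) + complex.Im (v 0 j) * complex.Im (w 0 j)).

Definition rdot (x y : 'rV[R]_8) : R := \sum_(j < 8) x 0 j * y 0 j.

Definition isZ (r : R) : Prop := exists z : int, r = z%:~R.

Definition E8 (x : 'rV[R]_8) : Prop :=
  ((forall j, isZ (x 0 j)) \/ (forall j, isZ (x 0 j - 1/2))) /\
  isZ ((\sum_(j < 8) x 0 j) / 2).

(* E6 = vectors of E8 orthogonal to the A2 spanned by e1-e2, e2-e3 *)
Definition E6span (x : 'rV[R]_8) : Prop := x 0 0 = x 0 1 /\ x 0 1 = x 0 2.
Definition E6 (x : 'rV[R]_8) : Prop := E8 x /\ E6span x.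

Definition E6dual (y : 'rV[R]_8) : Prop :=
  E6span y /\ forall x, E6 x -> isZ (rdot x y).

Definition lattice_similar (L : 'rV[R[i]]_3 -> Prop) (L' : 'rV[R]_8 -> Prop) : Prop :=
  exists (f : 'rV[R[i]]_3 -> 'rV[R]_8) (c : R),
    [/\ (forall v w, f (v + w) = f v + f w),
        (forall (r : R) v, f ((r%:C) *: v) = r *: f v),
        0 < c,
        (forall v w, rdot (f v) (f w) = c * cdot v w)
      & (forall y, L' y <-> exists v, L v /\ y = f v)].

End Defs.

(* Every vector of Lambda_1 = theta E^3 is theta u with u in E^3.  The entries of M2, M3
   and M4 are all = 1 mod theta and M M^* = 3 = - theta^2, so theta u lies in the E-span of
   their rows as soon as u0 + u1 + u2 = 0 mod theta; conversely, membership in the span of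
   M2 alone forces this, as the row sums of M2 are 3, 0, 0.  Hence the intersection is
   theta L with L = {u in E^3 : theta | u0 + u1 + u2}, which has an explicit Z-basis.  An
   explicit R-linear map C^3 -> R^8 multiplying inner products by 2/9 sends theta times this
   basis to the basis of E6^* dual to a basis of E6, so it maps the intersection onto E6^*. *)

From HB Require Import structures.
From mathcomp Require Import all_boot all_order all_algebra.
From mathcomp Require Import reals complex.
From mathcomp Require Import ring lra zify.
Set Implicit Arguments. Unset Strict Implicit. Unset Printing Implicit Defensive.
Import Order.TTheory GRing.Theory Num.Theory.
Local Open Scope ring_scope.
Local Open Scope complex_scope.

Lemma sum_ord3 (V : nmodType) (F : 'I_3 -> V) : \sum_(j < 3) F j = F 0 + F 1 + F 2.
Proof.
rewrite !big_ord_recr big_ord0 /= add0r.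
by congr (F _ + F _ + F _); apply: val_inj.
Qed.

Lemma sum_ord6 (V : nmodType) (F : 'I_6 -> V) :
  \sum_(j < 6) F j = F 0 + F 1 + F 2 + F 3 + F 4 + F 5.
Proof.
rewrite !big_ord_recr big_ord0 /= add0r.
by congr (F _ + F _ + F _ + F _ + F _ + F _); apply: val_inj.
Qed.

Lemma sum_ord8 (V : nmodType) (F : 'I_8 -> V) :
  \sum_(j < 8) F j = F 0 + F 1 + F 2 + F 3 + F 4 + F 5 + F 6 + F 7.
Proof.
rewrite !big_ord_recr big_ord0 /= add0r.
by congr (F _ + F _ + F _ + F _ + F _ + F _ + F _ + F _); apply: val_inj.
Qed.

Definition row_seq {V : nmodType} {n : nat} (l : seq V) : 'rV[V]_n := \row_j nth 0 l j.

Lemma row3P (V : nmodType) (P : 'rV[V]_3 -> Prop) :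
  (forall z0 z1 z2, P (row_seq [:: z0; z1; z2])) -> forall u, P u.
Proof.
move=> Pl u; suff -> : u = row_seq [:: u 0 0; u 0 1; u 0 2] by [].
by apply/rowP=> -[[|[|[|j]]] hj] //; rewrite mxE /=; congr (u 0 _); apply: val_inj.
Qed.

Lemma row8P (V : nmodType) (P : 'rV[V]_8 -> Prop) :
  (forall x0 x1 x2 x3 x4 x5 x6 x7, P (row_seq [:: x0; x1; x2; x3; x4; x5; x6; x7])) ->
  forall x, P x.
Proof.
move=> Pl x; suff -> : x = row_seq [:: x 0 0; x 0 1; x 0 2; x 0 3; x 0 4; x 0 5; x 0 6; x 0 7].
  by [].
by apply/rowP=> -[[|[|[|[|[|[|[|[|j]]]]]]]] hj] //; rewrite mxE /=; congr (x 0 _); apply: val_inj.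
Qed.

Lemma mulmxzE (T : pzRingType) m n (A : 'M[T]_(m, n)) k i j : (A *~ k) i j = A i j *~ k.
Proof. by rewrite -scaler_int mxE mulrzl. Qed.

Definition zspan (V : zmodType) n (b : 'I_n -> V) (x : V) : Prop :=
  exists k : 'I_n -> int, x = \sum_i b i *~ k i.

Lemma zspan_image (U V : zmodType) n (f : {additive U -> V}) (b : 'I_n -> U) (c : 'I_n -> V) :
  (forall i, f (b i) = c i) -> forall y, zspan c y <-> exists2 x, zspan b x & y = f x.
Proof.
move=> fb y; have fsum k : f (\sum_i b i *~ k i) = \sum_i c i *~ k i.
  by rewrite raddf_sum; apply: eq_bigr => i _; rewrite raddfMz fb.
split=> [[k ->] | [x [k ->] ->]]; last by exists k; rewrite fsum.
by exists (\sum_i b i *~ k i); [exists k | rewrite fsum].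
Qed.

Lemma zspan_closed (V : zmodType) n (P : V -> Prop) (b : 'I_n -> V) :
  P 0 -> (forall x y, P x -> P y -> P (x + y)) -> (forall x k, P x -> P (x *~ k)) ->
  (forall i, P (b i)) -> forall x, zspan b x -> P x.
Proof.
move=> P0 PD PMz Pb _ [k ->]; apply: (big_ind P) => // i _; exact: PMz.
Qed.

Section EisensteinE6.
Variable R : realType.
Local Notation C := R[i].
Local Notation w := (omega R).
Local Notation sqrt3 := (Num.sqrt (3 : R)).

Lemma sqrt3_sqr : sqrt3 * sqrt3 = 3.
Proof. by rewrite -expr2 sqr_sqrtr. Qed.

Lemma sqrt3_neq0 : sqrt3 != 0.
Proof. by rewrite sqrtr_eq0 -ltNge. Qed.

Lemma omega_root : w ^+ 2 + w + 1 = 0.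
Proof.
rewrite /omega expr2; simpc; apply/eqP; rewrite eq_complex /=; apply/andP; split; apply/eqP.
  by have := sqrt3_sqr; lra.
lra.
Qed.

Lemma omegabE : omegab R = - 1 - w.
Proof.
rewrite /omegab /omega /=; apply/eqP; rewrite eq_complex /=.
by apply/andP; split; apply/eqP; lra.
Qed.

Definition eis (p q : int) : C := p%:~R + q%:~R * w.

Lemma eisD p q p' q' : eis p q + eis p' q' = eis (p + p') (q + q').
Proof. rewrite /eis; ring. Qed.

Lemma eisN p q : - eis p q = eis (- p) (- q).
Proof. rewrite /eis; ring. Qed.

Lemma eisMz p q k : eis p q *~ k = eis (p * k) (q * k).
Proof. rewrite /eis; ring. Qed.

Lemma eisM p q p' q' :
  eis p q * eis p' q' = eis (p * p' - q * q') (p * q' + q * p' - q * q').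
Proof.
have -> : eis p q * eis p' q' =
    eis (p * p' - q * q') (p * q' + q * p' - q * q') + (q * q')%:~R * (w ^+ 2 + w + 1).
  by rewrite /eis; ring.
by rewrite omega_root mulr0 addr0.
Qed.

Lemma eis00 : eis 0 0 = 0.
Proof. by rewrite /eis !mul0r addr0. Qed.

Lemma eis10 : eis 1 0 = 1.
Proof. by rewrite /eis mul0r addr0. Qed.

Lemma eis30 : eis 3 0 = 3.
Proof. by rewrite /eis mul0r addr0. Qed.

Lemma omega_eis : w = eis 0 1.
Proof. by rewrite /eis mul1r add0r. Qed.

Lemma omegab_eis : omegab R = eis (-1) (-1).
Proof. by rewrite omegabE /eis; ring. Qed.

Lemma theta_eis : theta R = eis 1 2.
Proof. by rewrite /theta omegab_eis omega_eis eisN eisD. Qed.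

Lemma theta_sqr : theta R ^+ 2 = - 3.
Proof. by rewrite expr2 theta_eis eisM /eis /=; ring. Qed.

Lemma theta_neq0 : theta R != 0.
Proof.
apply/eqP=> th0; have := theta_sqr; rewrite th0 expr0n /= => /eqP.
by rewrite eq_sym oppr_eq0 pnatr_eq0.
Qed.

Ltac eis_norm :=
  rewrite ?mulr1n ?mulr0n -?eis30 ?theta_eis ?omegab_eis ?omega_eis -?eis10 -?eis00
          !(eisM, eisD).

Lemma eisenstein_eis p q : eisenstein (eis p q).
Proof. by exists p, q. Qed.

Lemma eisenstein0 : eisenstein (0 : C).
Proof. by rewrite -eis00; apply: eisenstein_eis. Qed.

Lemma eisensteinD (z z' : C) : eisenstein z -> eisenstein z' -> eisenstein (z + z').
Proof.
move=> [p [q ->]] [p' [q' ->]].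
by rewrite -/(eis p q) -/(eis p' q') eisD; apply: eisenstein_eis.
Qed.

Lemma eisensteinN (z : C) : eisenstein z -> eisenstein (- z).
Proof. by move=> [p [q ->]]; rewrite -/(eis p q) eisN; apply: eisenstein_eis. Qed.

Lemma eisensteinM (z z' : C) : eisenstein z -> eisenstein z' -> eisenstein (z * z').
Proof.
move=> [p [q ->]] [p' [q' ->]].
by rewrite -/(eis p q) -/(eis p' q') eisM; apply: eisenstein_eis.
Qed.

Lemma eisensteinMz (z : C) k : eisenstein z -> eisenstein (z *~ k).
Proof. by move=> [p [q ->]]; rewrite -/(eis p q) eisMz; apply: eisenstein_eis. Qed.

(* The coordinates of z in the real basis (1, omega) of C. *)
Definition eis_c1 (z : C) : R := complex.Re z + complex.Im z / sqrt3.
Definition eis_cw (z : C) : R := 2 * (complex.Im z / sqrt3).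

Lemma eis_c1_is_zmod_morphism : zmod_morphism eis_c1.
Proof. by case=> a b [c d]; rewrite /eis_c1 /=; ring. Qed.

HB.instance Definition _ := GRing.isZmodMorphism.Build C R eis_c1 eis_c1_is_zmod_morphism.

Lemma eis_cw_is_zmod_morphism : zmod_morphism eis_cw.
Proof. by case=> a b [c d]; rewrite /eis_cw /=; ring. Qed.

HB.instance Definition _ := GRing.isZmodMorphism.Build C R eis_cw eis_cw_is_zmod_morphism.

Lemma eis_c1Z (r : R) z : eis_c1 (r%:C * z) = r * eis_c1 z.
Proof. by case: z => a b; rewrite /eis_c1 /=; ring. Qed.

Lemma eis_cwZ (r : R) z : eis_cw (r%:C * z) = r * eis_cw z.
Proof. by case: z => a b; rewrite /eis_cw /=; ring. Qed.

Lemma eis_c1_eis p q : eis_c1 (eis p q) = p%:~R.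
Proof.
rewrite /eis_c1 /eis /omega -!(rmorph_int (real_complex R)) /=.
by have := sqrt3_neq0; move: sqrt3 => s hs; field.
Qed.

Lemma eis_cw_eis p q : eis_cw (eis p q) = q%:~R.
Proof.
rewrite /eis_cw /eis /omega -!(rmorph_int (real_complex R)) /=.
by have := sqrt3_neq0; move: sqrt3 => s hs; field.
Qed.

Lemma eis_inj p q p' q' : eis p q = eis p' q' -> p = p' /\ q = q'.
Proof.
move=> e; split; apply: (@intr_inj R).
  by rewrite -(eis_c1_eis p q) e eis_c1_eis.
by rewrite -(eis_cw_eis p q) e eis_cw_eis.
Qed.

Lemma dot_eis_coords z z' :
  complex.Re z * complex.Re z' + complex.Im z * complex.Im z' =
  eis_c1 z * eis_c1 z' - (eis_c1 z * eis_cw z' + eis_cw z * eis_c1 z') / 2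
  + eis_cw z * eis_cw z'.
Proof.
rewrite /eis_c1 /eis_cw.
have im_sqr (b d : R) : b * d = b / sqrt3 * (d / sqrt3) * 3.
  have := sqrt3_neq0; have := sqrt3_sqr; move: sqrt3 => s s2 hs.
  by rewrite -s2; field.
rewrite (im_sqr (complex.Im z)); move: (complex.Im z / sqrt3) (complex.Im z' / sqrt3) => u v.
by field.
Qed.

Definition Eisvec (u : 'rV[C]_3) : Prop := forall j, eisenstein (u 0 j).

Definition Ltheta (u : 'rV[C]_3) : Prop :=
  Eisvec u /\ exists2 e, eisenstein e & \sum_j u 0 j = theta R * e.

Lemma Espan_theta_mul (M D : 'M[C]_3) u :
  (const_mx 1 + theta R *: D) *m M = 3%:M -> (forall i j, eisenstein (D i j)) ->
  Ltheta u -> Espan M (theta R *: u).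
Proof.
move=> NM hD [hu [e he sum_u]].
have uJ : u *m (const_mx 1 : 'M_3) = (theta R * e) *: const_mx 1.
  apply/rowP=> j; rewrite !mxE -sum_u mulr_suml.
  by apply: eq_bigr => k _; rewrite mxE.
exists (- (e *: const_mx 1 + u *m D)); split.
  move=> j; rewrite !mxE; apply/eisensteinN/eisensteinD; first by rewrite mulr1.
  apply: (big_ind (@eisenstein R)) => [|x y|k _]; first exact: eisenstein0.
    exact: eisensteinD.
  by apply: eisensteinM.
have thetaX : theta R *: (e *: const_mx 1 + u *m D) = u *m (const_mx 1 + theta R *: D).
  by rewrite scalerDr scalerA -uJ mulmxDr scalemxAr.
apply: (scalerI theta_neq0).
rewrite mulNmx scalerN scalemxAl thetaX -mulmxA NM mul_mx_scalar.
by rewrite scalerA -expr2 theta_sqr scaleNr.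
Qed.

Lemma M1E : M1 R = theta R *: 1%:M.
Proof.
apply/matrixP=> i j; rewrite !mxE.
by case: i j => [[|[|[|i]]] hi] [[|[|[|j]]] hj] //=; rewrite ?mulr1 ?mulr0.
Qed.

Lemma Espan_M1 v : Espan (M1 R) v <-> exists2 u, Eisvec u & v = theta R *: u.
Proof.
rewrite /Espan M1E.
by split=> [[a [ha ->]] | [u hu ->]]; [exists a | exists u; split]; rewrite // -scalemxAr mulmx1.
Qed.

Lemma Espan_M2_sum v : Espan (M2 R) v -> exists2 e, eisenstein e & \sum_j v 0 j = 3 * e.
Proof.
move=> [a [ha ->]]; exists (a 0 0) => //.
by rewrite sum_ord3 !mxE !sum_ord3 !mxE /= omegabE; ring.
Qed.

(* const_mx 1 + theta *: Dk is the conjugate transpose of Mk, as omega - 1 = - theta * omegab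
   and omegab - 1 = theta * omega. *)
Definition D2 : 'M[C]_3 :=
  mx3 [:: [:: 0; 0; 0]; [:: 0; eis 0 1; eis 1 1]; [:: 0; eis 1 1; eis 0 1]].
Definition D3 : 'M[C]_3 :=
  mx3 [:: [:: 0; 0; 0]; [:: 0; eis 0 1; eis 1 1]; [:: eis 0 1; 0; eis 1 1]].
Definition D4 : 'M[C]_3 :=
  mx3 [:: [:: 0; 0; 0]; [:: 0; eis 0 1; eis 1 1]; [:: eis 1 1; eis 0 1; 0]].

Lemma D2_M2 : (const_mx 1 + theta R *: D2) *m M2 R = 3%:M.
Proof.
apply/matrixP=> i j; rewrite !mxE sum_ord3 !mxE /=.
by case: i j => [[|[|[|i]]] hi] [[|[|[|j]]] hj] //=; eis_norm.
Qed.

Lemma D3_M3 : (const_mx 1 + theta R *: D3) *m M3 R = 3%:M.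
Proof.
apply/matrixP=> i j; rewrite !mxE sum_ord3 !mxE /=.
by case: i j => [[|[|[|i]]] hi] [[|[|[|j]]] hj] //=; eis_norm.
Qed.

Lemma D4_M4 : (const_mx 1 + theta R *: D4) *m M4 R = 3%:M.
Proof.
apply/matrixP=> i j; rewrite !mxE sum_ord3 !mxE /=.
by case: i j => [[|[|[|i]]] hi] [[|[|[|j]]] hj] //=; eis_norm.
Qed.

Lemma Lambda_intE v : Lambda_int v <-> exists2 u, Ltheta u & v = theta R *: u.
Proof.
split=> [[/Espan_M1 [u hu ->] /Espan_M2_sum [e he sum_v] _ _] | [u hu ->]].
  exists u => //; split=> //; exists (- e); first exact: eisensteinN.
  apply: (mulfI theta_neq0); rewrite mulr_sumr mulrA -expr2 theta_sqr mulrNN -sum_v.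
  by apply: eq_bigr => j _; rewrite mxE.
split; first by apply/Espan_M1; exists u => //; case: hu.
all: [> apply: (Espan_theta_mul D2_M2 _ hu) | apply: (Espan_theta_mul D3_M3 _ hu)
      | apply: (Espan_theta_mul D4_M4 _ hu)].
all: move=> i j; rewrite !mxE.
all: by case: i j => [[|[|[|i]]] hi] [[|[|[|j]]] hj] //=; first [apply: eisenstein0 | apply: eisenstein_eis].
Qed.

(* The preimage of E6dual_basis under u |-> sim (theta *: u), see sim_Lbasis. *)
Definition Lbasis (i : 'I_6) : 'rV[C]_3 :=
  row_seq (nth [::]
    [:: [:: eis 0 1; eis (-1) 0; eis 0 0]; [:: eis 0 0; eis 2 1; eis 0 0];
        [:: eis 0 0; eis (-1) (-2); eis 0 0]; [:: eis (-1) (-1); eis 0 1; eis 0 1];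
        [:: eis 0 0; eis 0 0; eis (-1) (-2)]; [:: eis (-1) 1; eis 0 0; eis 0 0]] i).

Lemma Ltheta0 : Ltheta 0.
Proof.
split=> [j|]; first by rewrite mxE; apply: eisenstein0.
by exists 0; [apply: eisenstein0 | rewrite mulr0 big1 // => j _; rewrite mxE].
Qed.

Lemma LthetaD u u' : Ltheta u -> Ltheta u' -> Ltheta (u + u').
Proof.
move=> [hu [e he su]] [hu' [e' he' su']]; split=> [j|].
  by rewrite mxE; apply: eisensteinD.
exists (e + e'); first exact: eisensteinD.
by rewrite mulrDr -su -su' -big_split; apply: eq_bigr => j _; rewrite mxE.
Qed.

Lemma LthetaMz u k : Ltheta u -> Ltheta (u *~ k).
Proof.
move=> [hu [e he su]]; split=> [j|].
  by rewrite mulmxzE; apply: eisensteinMz.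
exists (e *~ k); first exact: eisensteinMz.
by rewrite mulrzAr -su mulrz_suml; apply: eq_bigr => j _; rewrite mulmxzE.
Qed.

Lemma Ltheta_Lbasis i : Ltheta (Lbasis i).
Proof.
split=> [j|].
  by rewrite mxE; case: i j => [[|[|[|[|[|[|i]]]]]] hi] [[|[|[|j]]] hj] //=; apply: eisenstein_eis.
case: i => [[|[|[|[|[|[|i]]]]]] hi] //; rewrite sum_ord3 !mxE /=.
- by exists (eis 1 1); [apply: eisenstein_eis | eis_norm].
- by exists (eis 0 (-1)); [apply: eisenstein_eis | eis_norm].
- by exists (eis (-1) 0); [apply: eisenstein_eis | eis_norm].
- by exists (eis 1 1); [apply: eisenstein_eis | eis_norm].
- by exists (eis (-1) 0); [apply: eisenstein_eis | eis_norm].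
- by exists (eis 1 1); [apply: eisenstein_eis | eis_norm].
Qed.

Lemma Ltheta_zspan u : Ltheta u <-> zspan Lbasis u.
Proof.
split; last exact: zspan_closed Ltheta0 LthetaD LthetaMz Ltheta_Lbasis u.
elim/row3P: u => z0 z1 z2 [hu [e [pe [qe ->]]]].
move: (hu 0) (hu 1) (hu 2); rewrite !mxE /= => -[p0 [q0 ->]] [p1 [q1 ->]] [p2 [q2 ->]].
rewrite sum_ord3 !mxE /= -!/(eis _ _) theta_eis !(eisM, eisD) => /eis_inj[sum_p sum_q].
exists (fun i : 'I_6 => nth 0 [:: p0 + q0 - 4 * p2 + 2 * q2; 2 * pe - 2 * qe - 4 * p2 - q1 + q2;
  pe - qe - 3 * p2 - q1 + q2; q2 - 2 * p2; - p2; 2 * p2 - p0 - q2] i).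
apply/rowP=> -[[|[|[|j]]] hj] //; rewrite summxE sum_ord6 !mulmxzE !mxE /= -!/(eis _ _).
all: by rewrite !(eisMz, eisD); congr eis; lia.
Qed.

Lemma Lambda_int_zspan v : Lambda_int v <-> zspan (fun i => theta R *: Lbasis i) v.
Proof.
have image := zspan_image (f := *:%R (theta R) : 'rV[C]_3 -> 'rV[C]_3) (b := Lbasis) (fun=> erefl) v.
apply: iff_trans (Lambda_intE v) (iff_sym _); apply: iff_trans image _.
by split=> -[u hu ->]; exists u => //; apply/Ltheta_zspan.
Qed.

Lemma isZD (r s : R) : isZ r -> isZ s -> isZ (r + s).
Proof. by move=> [a ->] [b ->]; exists (a + b); rewrite intrD. Qed.

Lemma isZMz (r : R) k : isZ r -> isZ (r *~ k).
Proof. by move=> [a ->]; exists (a * k); rewrite intrM mulrzr. Qed.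

Lemma rdotDr (x y z : 'rV[R]_8) : rdot x (y + z) = rdot x y + rdot x z.
Proof. by rewrite /rdot -big_split; apply: eq_bigr => j _; rewrite mxE mulrDr. Qed.

Lemma rdotMzr (x y : 'rV[R]_8) k : rdot x (y *~ k) = rdot x y *~ k.
Proof. by rewrite /rdot mulrz_suml; apply: eq_bigr => j _; rewrite mulmxzE mulrzAr. Qed.

Definition E6_basis (i : 'I_6) : 'rV[R]_8 :=
  row_seq (nth [::]
    [:: [:: 5/2; 5/2; 5/2; -3/2; -3/2; -3/2; -3/2; -3/2]; [:: 2; 2; 2; -2; -1; -1; -1; -1];
        [:: 3/2; 3/2; 3/2; -3/2; -3/2; -1/2; -1/2; -1/2]; [:: 1; 1; 1; -1; -1; -1; 0; 0];
        [:: 1/2; 1/2; 1/2; -1/2; -1/2; -1/2; -1/2; 1/2]; [:: -1; -1; -1; 1; 1; 1; 1; 1]] i).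

(* The dual basis of E6_basis: on E6span, pairing with it gives the functionals
   (x0 + x1 + x2) / 3 + x3, x4 - x3, x5 - x4, x6 - x5, x7 - x6 and (x0 + ... + x7) / 2,
   which are visibly integral on E6. *)
Definition E6dual_basis (i : 'I_6) : 'rV[R]_8 :=
  row_seq (nth [::]
    [:: [:: 1/3; 1/3; 1/3; 1; 0; 0; 0; 0]; [:: 0; 0; 0; -1; 1; 0; 0; 0];
        [:: 0; 0; 0; 0; -1; 1; 0; 0]; [:: 0; 0; 0; 0; 0; -1; 1; 0];
        [:: 0; 0; 0; 0; 0; 0; -1; 1]; [:: 1/2; 1/2; 1/2; 1/2; 1/2; 1/2; 1/2; 1/2]] i).

Lemma E6_basis_mem i : E6 (E6_basis i).
Proof.
split; last by case: i => [[|[|[|[|[|[|i]]]]]] hi] //; rewrite /E6span !mxE /=.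
split; last first.
  case: i => [[|[|[|[|[|[|i]]]]]] hi] //; rewrite sum_ord8 !mxE /=;
    [exists 0 | exists 0 | exists 0 | exists 0 | exists 0 | exists 1]; lra.
case: i => [[|[|[|[|[|[|i]]]]]] hi] //; [right | left | right | left | right | left]; move=> j.
- exists (nth 0 [:: 2; 2; 2; -2; -2; -2; -2; -2] j).
  by case: j => [[|[|[|[|[|[|[|[|j]]]]]]]] hj] //; rewrite !mxE /=; lra.
- exists (nth 0 [:: 2; 2; 2; -2; -1; -1; -1; -1] j).
  by case: j => [[|[|[|[|[|[|[|[|j]]]]]]]] hj] //; rewrite !mxE /=; lra.
- exists (nth 0 [:: 1; 1; 1; -2; -2; -1; -1; -1] j).
  by case: j => [[|[|[|[|[|[|[|[|j]]]]]]]] hj] //; rewrite !mxE /=; lra.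
- exists (nth 0 [:: 1; 1; 1; -1; -1; -1; 0; 0] j).
  by case: j => [[|[|[|[|[|[|[|[|j]]]]]]]] hj] //; rewrite !mxE /=; lra.
- exists (nth 0 [:: 0; 0; 0; -1; -1; -1; -1; 0] j).
  by case: j => [[|[|[|[|[|[|[|[|j]]]]]]]] hj] //; rewrite !mxE /=; lra.
- exists (nth 0 [:: -1; -1; -1; 1; 1; 1; 1; 1] j).
  by case: j => [[|[|[|[|[|[|[|[|j]]]]]]]] hj] //; rewrite !mxE /=; lra.
Qed.

Lemma E6_rdot_dual x i : E6 x -> isZ (rdot x (E6dual_basis i)).
Proof.
elim/row8P: x => x0 x1 x2 x3 x4 x5 x6 x7 [[hZ [s hs]] [h01 h12]].
rewrite sum_ord8 !mxE /= in hs; rewrite !mxE /= in h01 h12.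
have [eta hx] : exists eta : int,
    forall j : 'I_8, isZ (row_seq [:: x0; x1; x2; x3; x4; x5; x6; x7] 0 j - eta%:~R / 2).
  by case: hZ => hZ; [exists 0 | exists 1] => j; rewrite ?mul0r ?subr0 ?mulr1z; apply: hZ.
move: (hx 0) (hx 1) (hx 2) (hx 3) (hx 4) (hx 5) (hx 6) (hx 7); rewrite !mxE /=.
move=> [u0 e0] [u1 e1] [u2 e2] [u3 e3] [u4 e4] [u5 e5] [u6 e6] [u7 e7].
case: i => [[|[|[|[|[|[|i]]]]]] hi] //; rewrite /rdot sum_ord8 !mxE /=.
- by exists (u0 + u3 + eta); rewrite !intrD; lra.
- by exists (u4 - u3); rewrite intrB; lra.
- by exists (u5 - u4); rewrite intrB; lra.
- by exists (u6 - u5); rewrite intrB; lra.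
- by exists (u7 - u6); rewrite intrB; lra.
- by exists s; lra.
Qed.

Lemma E6span_decomp y : E6span y -> y = \sum_i rdot (E6_basis i) y *: E6dual_basis i.
Proof.
elim/row8P: y => y0 y1 y2 y3 y4 y5 y6 y7 []; rewrite !mxE /= => h01 h12.
apply/rowP=> j; rewrite summxE sum_ord6 /rdot !sum_ord8 !mxE /=.
by case: j => [[|[|[|[|[|[|[|[|j]]]]]]]] hj] //=; lra.
Qed.

Lemma E6dual0 : E6dual (0 : 'rV[R]_8).
Proof.
split=> [|x _]; first by rewrite /E6span !mxE.
by exists 0; rewrite /rdot big1 // => j _; rewrite mxE mulr0.
Qed.

Lemma E6dualD (y y' : 'rV[R]_8) : E6dual y -> E6dual y' -> E6dual (y + y').
Proof.
move=> [[a b] hy] [[a' b'] hy']; split=> [|x hx].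
  by rewrite /E6span !mxE a b a' b'.
by rewrite rdotDr; apply: isZD; [apply: hy | apply: hy'].
Qed.

Lemma E6dualMz (y : 'rV[R]_8) k : E6dual y -> E6dual (y *~ k).
Proof.
move=> [[a b] hy]; split=> [|x hx]; first by rewrite /E6span !mulmxzE a b.
by rewrite rdotMzr; apply/isZMz/hy.
Qed.

Lemma E6dual_basis_mem i : E6dual (E6dual_basis i).
Proof.
split=> [|x hx]; last exact: E6_rdot_dual.
by case: i => [[|[|[|[|[|[|i]]]]]] hi] //; rewrite /E6span !mxE.
Qed.

Lemma E6dual_zspan y : E6dual y <-> zspan E6dual_basis y.
Proof.
split=> [[hy hZ] | ]; last exact: zspan_closed E6dual0 E6dualD E6dualMz E6dual_basis_mem y.
have /fin_all_exists [k hk] : forall i, exists k : int, rdot (E6_basis i) y = k%:~R.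
  by move=> i; apply: hZ (E6_basis_mem i).
by exists k; rewrite {1}(E6span_decomp hy); apply: eq_bigr => i _; rewrite hk scaler_int.
Qed.

Definition sim (v : 'rV[C]_3) : 'rV[R]_8 :=
  let x (j : 'I_3) := eis_c1 (v 0 j) in let y (j : 'I_3) := eis_cw (v 0 j) in
  row_seq [:: - (x 0 + y 2) / 6; - (x 0 + y 2) / 6; - (x 0 + y 2) / 6;
              - x 0 / 6 - y 1 / 3 + y 2 / 6; - x 0 / 6 - x 1 / 3 + y 1 / 3 + y 2 / 6;
              - x 0 / 6 + x 1 / 3 + y 2 / 6; x 0 / 6 - y 0 / 3 - x 2 / 3 + y 2 / 6;
              x 0 / 6 - y 0 / 3 + x 2 / 3 - y 2 / 6].

Lemma sim_is_zmod_morphism : zmod_morphism sim.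
Proof.
move=> u v; apply/rowP=> c; rewrite !mxE /= !raddfB.
by case: c => [[|[|[|[|[|[|[|[|c]]]]]]]] hc] //=; ring.
Qed.

HB.instance Definition _ := GRing.isZmodMorphism.Build _ _ sim sim_is_zmod_morphism.

Lemma sim_scale (r : R) v : sim (r%:C *: v) = r *: sim v.
Proof.
apply/rowP=> c; rewrite !mxE /= !eis_c1Z !eis_cwZ.
by case: c => [[|[|[|[|[|[|[|[|c]]]]]]]] hc] //=; ring.
Qed.

Lemma sim_dot v w : rdot (sim v) (sim w) = 2 / 9 * cdot v w.
Proof. by rewrite /rdot /cdot sum_ord8 sum_ord3 !mxE /= !dot_eis_coords; field. Qed.

Lemma sim_Lbasis i : sim (theta R *: Lbasis i) = E6dual_basis i.
Proof.
apply/rowP=> c; rewrite !mxE /=.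
case: i => [[|[|[|[|[|[|i]]]]]] hi] //=; rewrite theta_eis !eisM !eis_c1_eis !eis_cw_eis.
all: by case: c => [[|[|[|[|[|[|[|[|c]]]]]]]] hc] //=; field.
Qed.

End EisensteinE6.

Theorem mainTheorem6 (R : realType) : lattice_similar (@Lambda_int R) (@E6dual R).
Proof.
exists (@sim R), (2 / 9); split=> [v w | r v | | v w | y].
- exact: raddfD.
- exact: sim_scale.
- by rewrite divr_gt0.
- exact: sim_dot.
apply: iff_trans (E6dual_zspan y) _.
apply: iff_trans (zspan_image (@sim_Lbasis R) y) _.
split=> [[v hv ->] | [v [hv ->]]].
  by exists v; split=> //; apply/Lambda_int_zspan.
by exists v => //; apply/Lambda_int_zspan.
Qed.
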